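(* Let $M(C,\bar\xi,\pi)$ be a Myller configuration with Darboux frame $(\bar\xi,\bar\mu,\bar v)$ and invariants $G,K,T$, with $(G(s),T(s))\neq(0,0)$ for all $s$. Define $$\sigma_\mu=\frac{G^{2}\left(\frac{T}{G}\right)'-(G^{2}+T^{2})K}{(G^{2}+T^{2})^{3/2}},$$ where $G^2\left(\frac{T}{G}\right)'$ stands for $T'G-TG'$. Then $C$ is a $\bar\mu$-helix in $M$ if and only if $\sigma_\mu$ is constant; in that case the constant angle $\eta$ between $\bar\mu$ and the axis satisfies $\cot\eta=\mp\sigma_\mu$ (for an appropriate sign).
   Context: Let $C$ be a smooth curve in $E^3$ parametrized by arclength $s$; primes denote $d/ds$. A Myller configuration $M(C,\bar\xi,\pi)$ consists of a smooth unit vector field $\bar\xi$ along $C$ and a smooth oriented plane field $\pi$ with $\bar\xi\in\pi$; $\bar v$ is the unit normal of $\pi$, $\bar\mu=\bar v\times\bar\xi$, and the Darboux frame satisfies $\bar\xi'=G\bar\mu+K\bar v$, $\bar\mu'=-G\bar\xi+T\bar v$, $\bar v'=-K\bar\xi-T\bar\mu$. $C$ is a $\bar\mu$-helix in $M$ if there are a constant unit vector $\bar d_\mu$ and a constant $\eta$ with $\langle\bar\mu,\bar d_\mu\rangle=\cos\eta$ along $C$. *)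

From Stdlib Require Import Reals.
From Coquelicot Require Import Coquelicot.
Open Scope R_scope.

Record vec3 := V3 { vx : R; vy : R; vz : R }.

Definition dot (a b : vec3) : R := vx a * vx b + vy a * vy b + vz a * vz b.

Definition cross (a b : vec3) : vec3 :=
  V3 (vy a * vz b - vz a * vy b)
     (vz a * vx b - vx a * vz b)
     (vx a * vy b - vy a * vx b).

Definition vadd (a b : vec3) : vec3 := V3 (vx a + vx b) (vy a + vy b) (vz a + vz b).
Definition vscal (k : R) (a : vec3) : vec3 := V3 (k * vx a) (k * vy a) (k * vz a).

Definition in_I (a b : Rbar) (s : R) : Prop := Rbar_lt a s /\ Rbar_lt s b.

Definition smooth_on (a b : Rbar) (f : R -> R) : Prop :=
  forall (n : nat) (s : R), in_I a b s -> ex_derive_n f n s.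

Definition vsmooth_on (a b : Rbar) (F : R -> vec3) : Prop :=
  smooth_on a b (fun t => vx (F t)) /\ smooth_on a b (fun t => vy (F t)) /\
  smooth_on a b (fun t => vz (F t)).

Definition vderiv (F : R -> vec3) (s : R) (L : vec3) : Prop :=
  is_derive (fun t => vx (F t)) s (vx L) /\ is_derive (fun t => vy (F t)) s (vy L) /\
  is_derive (fun t => vz (F t)) s (vz L).

Definition myller_config (a b : Rbar) (r xi mu v : R -> vec3) (G K T : R -> R) : Prop :=
  vsmooth_on a b r /\ vsmooth_on a b xi /\ vsmooth_on a b mu /\ vsmooth_on a b v /\
  smooth_on a b G /\ smooth_on a b K /\ smooth_on a b T /\
  forall s, in_I a b s ->
    (exists r', vderiv r s r' /\ dot r' r' = 1) /\
    dot (xi s) (xi s) = 1 /\ dot (v s) (v s) = 1 /\ dot (xi s) (v s) = 0 /\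
    mu s = cross (v s) (xi s) /\
    vderiv xi s (vadd (vscal (G s) (mu s)) (vscal (K s) (v s))) /\
    vderiv mu s (vadd (vscal (- G s) (xi s)) (vscal (T s) (v s))) /\
    vderiv v s (vadd (vscal (- K s) (xi s)) (vscal (- T s) (mu s))).

Definition mu_helix (a b : Rbar) (mu : R -> vec3) : Prop :=
  exists (d : vec3) (eta : R), dot d d = 1 /\
    forall s, in_I a b s -> dot (mu s) d = cos eta.

Definition sigma_mu (G K T : R -> R) (s : R) : R :=
  (Derive T s * G s - T s * Derive G s - (G s ^ 2 + T s ^ 2) * K s)
  / Rpower (G s ^ 2 + T s ^ 2) (3 / 2).

From Stdlib Require Import Reals Lra Psatz.
From Coquelicot Require Import Coquelicot.
Open Scope R_scope.

(* Let [X, c, Z] be the components of a unit vector [d] on the frame [(xi, mu, v)].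
   If [c = <mu, d>] is constant, the Darboux equations give [T Z = G X] and, after a
   second differentiation, [T' Z - G' X - K w = (G^2 + T^2) c] with [w = T X + G Z].
   By Lagrange's identity [w^2 = (G^2 + T^2) sin^2 eta], and the second relation
   becomes [w (T' G - T G' - (G^2 + T^2) K) = (G^2 + T^2)^2 cos eta]; hence
   [cot eta = +- sigma_mu], with a sign that is constant by continuity.
   Conversely, if [sigma_mu = c0], then [c0 mu + (T xi + G v) / sqrt (G^2 + T^2)] has
   zero derivative, and its normalisation is an axis at angle [arccot c0] to [mu]. *)

Lemma dot_addl (x y d : vec3) : dot (vadd x y) d = dot x d + dot y d.
Proof. unfold dot, vadd; simpl; ring. Qed.

Lemma dot_addr (x y d : vec3) : dot d (vadd x y) = dot d x + dot d y.
Proof. unfold dot, vadd; simpl; ring. Qed.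

Lemma dot_scall (k : R) (x d : vec3) : dot (vscal k x) d = k * dot x d.
Proof. unfold dot, vscal; simpl; ring. Qed.

Lemma dot_scalr (k : R) (x d : vec3) : dot d (vscal k x) = k * dot d x.
Proof. unfold dot, vscal; simpl; ring. Qed.

Lemma dotC (x y : vec3) : dot x y = dot y x.
Proof. unfold dot; ring. Qed.

Lemma dot_crossl (x y : vec3) : dot (cross x y) x = 0.
Proof. destruct x, y; unfold dot, cross; simpl; ring. Qed.

Lemma dot_crossr (x y : vec3) : dot (cross x y) y = 0.
Proof. destruct x, y; unfold dot, cross; simpl; ring. Qed.

Lemma dot_cross_cross (x y : vec3) :
  dot (cross x y) (cross x y) = dot x x * dot y y - dot x y ^ 2.
Proof. destruct x, y; unfold dot, cross; simpl; ring. Qed.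

Lemma dot_orthonormal_cross (x y d : vec3) :
  dot x x = 1 -> dot y y = 1 -> dot x y = 0 ->
  dot d d = dot x d ^ 2 + dot (cross y x) d ^ 2 + dot y d ^ 2.
Proof.
  intros Hx Hy Hxy.
  (* the Gram determinant of (d, y, x) *)
  assert (Hgram : dot (cross y x) d ^ 2 = dot d d * dot y y * dot x x
    + 2 * dot d y * dot x y * dot x d - dot d d * dot x y ^ 2
    - dot y y * dot x d ^ 2 - dot x x * dot d y ^ 2).
  { destruct x, y, d; unfold dot, cross; simpl; ring. }
  rewrite Hgram, Hx, Hy, Hxy, (dotC d y). ring.
Qed.

Lemma vec3_eq_dot (x y : vec3) : (forall d, dot x d = dot y d) -> x = y.
Proof.
  intros H. destruct x as [x1 x2 x3], y as [y1 y2 y3].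
  assert (H1 := H (V3 1 0 0)). assert (H2 := H (V3 0 1 0)). assert (H3 := H (V3 0 0 1)).
  unfold dot in H1, H2, H3; simpl in H1, H2, H3.
  f_equal; lra.
Qed.

Lemma is_derive_dot (F : R -> vec3) (s : R) (L d : vec3) :
  vderiv F s L -> is_derive (fun t => dot (F t) d) s (dot L d).
Proof.
  intros (Hx & Hy & Hz). unfold dot.
  apply @is_derive_plus; [apply @is_derive_plus|];
    apply (is_derive_scal_l (K := R_AbsRing) (V := R_NormedModule)); assumption.
Qed.

Lemma in_I_nonempty (a b : Rbar) : Rbar_lt a b -> exists s, in_I a b s.
Proof.
  intros Hab; unfold in_I; destruct a as [a| |], b as [b| |]; simpl in *; try tauto.
  - exists ((a + b) / 2); split; lra.
  - exists (a + 1); split; [lra | exact I].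
  - exists (b - 1); split; [exact I | lra].
  - exists 0; split; exact I.
Qed.

Lemma in_I_locally (a b : Rbar) (s : R) : in_I a b s -> locally s (in_I a b).
Proof.
  intros [Ha Hb].
  exact (filter_and _ _ (open_Rbar_gt' s a Ha) (open_Rbar_lt' s b Hb)).
Qed.

Lemma in_I_between (a b : Rbar) (s t x : R) :
  in_I a b s -> in_I a b t -> Rmin s t <= x <= Rmax s t -> in_I a b x.
Proof.
  intros [Has Hsb] [Hat Htb] [Hmin Hmax]; split.
  - destruct a as [a| |]; simpl in *; auto.
    assert (a < Rmin s t) by (apply Rmin_glb_lt; assumption). lra.
  - destruct b as [b| |]; simpl in *; auto.
    assert (Rmax s t < b) by (apply Rmax_lub_lt; assumption). lra.
Qed.

Lemma ex_derive_continuity_pt (f : R -> R) (x : R) : ex_derive f x -> continuity_pt f x.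
Proof. intros Hf. apply continuity_pt_filterlim, (ex_derive_continuous f x Hf). Qed.

Lemma is_derive_0_const_on (a b : Rbar) (f : R -> R) :
  (forall t, in_I a b t -> is_derive f t 0) ->
  forall s t, in_I a b s -> in_I a b t -> f s = f t.
Proof.
  intros Hf s t Hs Ht.
  destruct (MVT_gen f s t (fun _ => 0)) as [c [_ Hc]].
  - intros x Hx. apply Hf, (in_I_between a b s t); auto; lra.
  - intros x Hx. apply ex_derive_continuity_pt. exists 0. apply Hf, (in_I_between a b s t); auto.
  - lra.
Qed.

Lemma const_on_is_derive_0 (a b : Rbar) (f : R -> R) (c s l : R) :
  in_I a b s -> (forall t, in_I a b t -> f t = c) -> is_derive f s l -> l = 0.
Proof.
  intros Hs Hc Hf.
  assert (Hf' : is_derive (fun _ => c) s l).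
  { apply (is_derive_ext_loc f); [|exact Hf].
    apply (filter_imp (in_I a b)); [exact Hc | exact (in_I_locally a b s Hs)]. }
  rewrite <- (is_derive_unique _ _ _ Hf'). apply Derive_const.
Qed.

Lemma continuous_sign_const_on (a b : Rbar) (u : R -> R) :
  (forall t, in_I a b t -> continuity_pt u t) ->
  (forall t, in_I a b t -> u t * u t = 1) ->
  forall s t, in_I a b s -> in_I a b t -> u s = u t.
Proof.
  intros Hc Hu.
  (* a sign change would force a zero of [u] in between *)
  assert (Hlt : forall s t, in_I a b s -> in_I a b t -> s < t -> u s = u t).
  { intros s t Hs Ht Hst.
    assert (Hbetween : forall x, s <= x <= t -> in_I a b x).
    { intros x Hx. apply (in_I_between a b s t); auto. rewrite Rmin_left, Rmax_right; lra. }
    assert (Htu := Hu t Ht).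
    destruct (Rsqr_eq (u s) (u t)) as [|Hneg]; [unfold Rsqr; rewrite Hu, Htu; auto | assumption |].
    exfalso.
    destruct (Ranalysis5.IVT_interv (fun x => - u s * u x) s t) as [z [Hz Hz0]];
      [|exact Hst|nra|nra|].
    - intros x Hx. apply continuity_pt_mult; [apply continuity_pt_const; intros ??; reflexivity|].
      exact (Hc x (Hbetween x Hx)).
    - assert (Hzu := Hu z (Hbetween z Hz)). nra. }
  intros s t Hs Ht.
  destruct (Rtotal_order s t) as [Hst|[->|Hts]]; auto.
  symmetry; auto.
Qed.

Lemma continuity_pt_normalized_combination (g t x z : R -> R) (c s : R) :
  ex_derive g s -> ex_derive t s -> ex_derive x s -> ex_derive z s ->
  0 < g s ^ 2 + t s ^ 2 -> c <> 0 ->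
  continuity_pt (fun r => (t r * x r + g r * z r) / (sqrt (g r ^ 2 + t r ^ 2) * c)) s.
Proof.
  intros Hg Ht Hx Hz HN Hc.
  apply ex_derive_continuity_pt.
  assert (Hq := sqrt_lt_R0 _ HN).
  auto_derive.
  replace (g s * (g s * 1) + t s * (t s * 1)) with (g s ^ 2 + t s ^ 2) by ring.
  repeat split; auto.
  apply Rmult_integral_contrapositive; split; lra.
Qed.

Lemma Rpower_3_2 (x : R) : 0 < x -> Rpower x (3 / 2) = x * sqrt x.
Proof.
  intros Hx. replace (3 / 2) with (1 + / 2) by field.
  rewrite Rpower_plus, Rpower_1, Rpower_sqrt; auto.
Qed.

Lemma pair_neq0_sqr_pos (g t : R) : (g, t) <> (0, 0) -> 0 < g ^ 2 + t ^ 2.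
Proof.
  intros H.
  destruct (Req_dec g 0) as [->|Hg]; [destruct (Req_dec t 0) as [->|Ht]|]; [now contradict H| |]; nra.
Qed.

Lemma lagrange_identity_parallel (g t x z : R) :
  t * z = g * x -> (t * x + g * z) ^ 2 = (g ^ 2 + t ^ 2) * (x ^ 2 + z ^ 2).
Proof.
  intros Hpar.
  assert (Hlag : (t * x + g * z) ^ 2 = (g ^ 2 + t ^ 2) * (x ^ 2 + z ^ 2) - (t * z - g * x) ^ 2) by ring.
  rewrite Hlag, Hpar. ring.
Qed.

Lemma helix_numerator_identity (g t g' t' k x z c : R) :
  t * z = g * x -> t' * z - g' * x - k * (t * x + g * z) = (g ^ 2 + t ^ 2) * c ->
  (t * x + g * z) * (t' * g - t * g' - (g ^ 2 + t ^ 2) * k) = (g ^ 2 + t ^ 2) ^ 2 * c.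
Proof.
  intros Hpar Hsec.
  assert (Hid : (t * x + g * z) * (t' * g - t * g' - (g ^ 2 + t ^ 2) * k) - (g ^ 2 + t ^ 2) ^ 2 * c
    = - (t' * t + g' * g) * (t * z - g * x)
      + (g ^ 2 + t ^ 2) * (t' * z - g' * x - k * (t * x + g * z) - (g ^ 2 + t ^ 2) * c)) by ring.
  rewrite Hpar, Hsec in Hid. lra.
Qed.

Lemma is_derive_axis_component (X M V G K T : R -> R) (s c0 G' T' : R) :
  is_derive X s (G s * M s + K s * V s) ->
  is_derive M s (- G s * X s + T s * V s) ->
  is_derive V s (- K s * X s + - T s * M s) ->
  is_derive G s G' -> is_derive T s T' -> 0 < G s ^ 2 + T s ^ 2 ->
  (T' * G s - T s * G' - (G s ^ 2 + T s ^ 2) * K s)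
    / ((G s ^ 2 + T s ^ 2) * sqrt (G s ^ 2 + T s ^ 2)) = c0 ->
  is_derive (fun t => c0 * M t + (T t * X t + G t * V t) / sqrt (G t ^ 2 + T t ^ 2)) s 0.
Proof.
  intros HX HM HV HG HT HN Hc.
  assert (Hq := sqrt_sqrt _ (Rlt_le _ _ HN)). assert (Hq0 := sqrt_lt_R0 _ HN).
  auto_derive.
  - replace (G s * (G s * 1) + T s * (T s * 1)) with (G s ^ 2 + T s ^ 2) by ring.
    repeat split; try (eexists; eassumption); lra.
  - change (fun x => ?f x) with f.
    rewrite (is_derive_unique _ _ _ HX), (is_derive_unique _ _ _ HM),
      (is_derive_unique _ _ _ HV), (is_derive_unique _ _ _ HG), (is_derive_unique _ _ _ HT).
    replace (G s * (G s * 1) + T s * (T s * 1)) with (G s ^ 2 + T s ^ 2) by ring.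
    set (q := sqrt (G s ^ 2 + T s ^ 2)) in *. clearbody q.
    assert (HK : K s = (T' * G s - T s * G' - c0 * (G s ^ 2 + T s ^ 2) * q) / (G s ^ 2 + T s ^ 2)).
    { rewrite <- Hc. field. lra. }
    rewrite HK.
    field_simplify; [|lra].
    replace (q ^ 2) with (G s ^ 2 + T s ^ 2) by (rewrite <- Hq; ring).
    unfold Rdiv; ring.
Qed.

Section Myller.

Variables (a b : Rbar) (r xi mu v : R -> vec3) (G K T : R -> R).
Hypothesis Hmyller : myller_config a b r xi mu v G K T.
Hypothesis Hab : Rbar_lt a b.
Hypothesis HGT : forall s, in_I a b s -> (G s, T s) <> (0, 0).

Let N (s : R) : R := G s ^ 2 + T s ^ 2.

Lemma sqr_GT_pos (s : R) : in_I a b s -> 0 < N s.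
Proof. intros Hs. exact (pair_neq0_sqr_pos _ _ (HGT s Hs)). Qed.

Lemma myller_orthonormal (s : R) : in_I a b s ->
  dot (xi s) (xi s) = 1 /\ dot (mu s) (mu s) = 1 /\ dot (v s) (v s) = 1 /\
  dot (mu s) (xi s) = 0 /\ dot (mu s) (v s) = 0 /\ dot (xi s) (v s) = 0.
Proof.
  intros Hs. destruct Hmyller as (_ & _ & _ & _ & _ & _ & _ & H).
  destruct (H s Hs) as (_ & Hxx & Hvv & Hxv & Hmu & _).
  rewrite Hmu, dot_cross_cross, dot_crossl, dot_crossr, Hxx, Hvv, dotC, Hxv.
  repeat split; ring.
Qed.

Lemma myller_parseval (s : R) (d : vec3) : in_I a b s ->
  dot d d = dot (xi s) d ^ 2 + dot (mu s) d ^ 2 + dot (v s) d ^ 2.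
Proof.
  intros Hs. destruct Hmyller as (_ & _ & _ & _ & _ & _ & _ & H).
  destruct (H s Hs) as (_ & Hxx & Hvv & Hxv & -> & _).
  apply dot_orthonormal_cross; auto.
Qed.

Lemma myller_darboux (s : R) (d : vec3) : in_I a b s ->
  is_derive (fun t => dot (xi t) d) s (G s * dot (mu s) d + K s * dot (v s) d) /\
  is_derive (fun t => dot (mu t) d) s (- G s * dot (xi s) d + T s * dot (v s) d) /\
  is_derive (fun t => dot (v t) d) s (- K s * dot (xi s) d + - T s * dot (mu s) d).
Proof.
  intros Hs. destruct Hmyller as (_ & _ & _ & _ & _ & _ & _ & H).
  destruct (H s Hs) as (_ & _ & _ & _ & _ & Dxi & Dmu & Dv).
  apply (is_derive_dot _ _ _ d) in Dxi, Dmu, Dv.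
  rewrite dot_addl, !dot_scall in Dxi, Dmu, Dv.
  exact (conj Dxi (conj Dmu Dv)).
Qed.

Lemma myller_is_derive_GT (s : R) : in_I a b s ->
  is_derive G s (Derive G s) /\ is_derive T s (Derive T s).
Proof.
  intros Hs. destruct Hmyller as (_ & _ & _ & _ & HG & _ & HT & _).
  split; apply Derive_correct; [exact (HG 1%nat s Hs) | exact (HT 1%nat s Hs)].
Qed.

Lemma sigma_mu_eq (s : R) : in_I a b s ->
  sigma_mu G K T s = (Derive T s * G s - T s * Derive G s - N s * K s) / (N s * sqrt (N s)).
Proof. intros Hs. unfold sigma_mu. rewrite Rpower_3_2; [reflexivity | exact (sqr_GT_pos s Hs)]. Qed.

Section Helix.

Variables (d : vec3) (eta : R).
Hypothesis Hd : dot d d = 1.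
Hypothesis Haxis : forall s, in_I a b s -> dot (mu s) d = cos eta.

Let X (s : R) : R := dot (xi s) d.
Let Z (s : R) : R := dot (v s) d.
Let w (s : R) : R := T s * X s + G s * Z s.

Lemma helix_parallel (s : R) : in_I a b s -> T s * Z s = G s * X s.
Proof.
  intros Hs. destruct (myller_darboux s d Hs) as (_ & Dmu & _).
  assert (H0 := const_on_is_derive_0 a b _ _ s _ Hs Haxis Dmu). unfold X, Z. lra.
Qed.

Lemma helix_second_order (s : R) : in_I a b s ->
  Derive T s * Z s - Derive G s * X s - K s * w s = N s * cos eta.
Proof.
  intros Hs. destruct (myller_darboux s d Hs) as (DX & _ & DZ).
  destruct (myller_is_derive_GT s Hs) as [DG DT].
  assert (D := @is_derive_minus _ _ _ _ s _ _
    (@is_derive_mult _ _ _ _ _ _ DT DZ Rmult_comm) (@is_derive_mult _ _ _ _ _ _ DG DX Rmult_comm)).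
  assert (Hpar : forall t, in_I a b t -> T t * Z t - G t * X t = 0).
  { intros t Ht. rewrite (helix_parallel t Ht). ring. }
  assert (H0 := const_on_is_derive_0 a b _ 0 s _ Hs Hpar D).
  rewrite Haxis in H0 by exact Hs.
  unfold w, N, X, Z. unfold minus, plus, opp, mult in H0. simpl in H0.
  apply Rminus_diag_uniq. rewrite <- H0. ring.
Qed.

Lemma helix_parseval (s : R) : in_I a b s -> X s ^ 2 + Z s ^ 2 = sin eta ^ 2.
Proof.
  intros Hs. assert (H := myller_parseval s d Hs).
  rewrite Hd, Haxis in H by exact Hs.
  assert (Hsc := sin2_cos2 eta). unfold Rsqr in Hsc. unfold X, Z. nra.
Qed.

Lemma helix_w_sqr (s : R) : in_I a b s -> w s ^ 2 = N s * sin eta ^ 2.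
Proof.
  intros Hs. unfold w, N.
  rewrite lagrange_identity_parallel, helix_parseval; auto using helix_parallel.
Qed.

Lemma helix_w_numerator (s : R) : in_I a b s ->
  w s * (Derive T s * G s - T s * Derive G s - N s * K s) = N s ^ 2 * cos eta.
Proof.
  intros Hs. apply helix_numerator_identity.
  - exact (helix_parallel s Hs).
  - exact (helix_second_order s Hs).
Qed.

Lemma helix_sin_neq0 : sin eta <> 0.
Proof.
  intros H0. destruct (in_I_nonempty a b Hab) as [s Hs].
  assert (HN := sqr_GT_pos s Hs).
  assert (Hw : w s = 0).
  { assert (Hw2 := helix_w_sqr s Hs). rewrite H0 in Hw2. nra. }
  assert (Hc : cos eta = 0).
  { apply (Rmult_eq_reg_l (N s ^ 2)); [|apply pow_nonzero; lra].
    rewrite <- helix_w_numerator, Hw by exact Hs. ring. }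
  assert (Hsc := sin2_cos2 eta). unfold Rsqr in Hsc. rewrite H0, Hc in Hsc. lra.
Qed.

Let u (s : R) : R := w s / (sqrt (N s) * sin eta).

Lemma helix_sign_sqr (s : R) : in_I a b s -> u s * u s = 1.
Proof.
  intros Hs. assert (HN := sqr_GT_pos s Hs). assert (Hsin := helix_sin_neq0).
  assert (Hq := sqrt_sqrt _ (Rlt_le _ _ HN)). assert (Hq0 := sqrt_lt_R0 _ HN).
  assert (Hw2 := helix_w_sqr s Hs).
  unfold u. set (q := sqrt (N s)) in *.
  replace (w s / (q * sin eta) * (w s / (q * sin eta))) with (w s ^ 2 / ((q * q) * sin eta ^ 2))
    by (field; split; assumption || lra).
  rewrite Hq, Hw2. field. split; [exact Hsin | lra].
Qed.

Lemma helix_sign_continuous (s : R) : in_I a b s -> continuity_pt u s.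
Proof.
  intros Hs. destruct (myller_darboux s d Hs) as (DX & _ & DZ).
  destruct (myller_is_derive_GT s Hs) as [DG DT].
  apply (continuity_pt_normalized_combination G T X Z).
  - exists (Derive G s); exact DG.
  - exists (Derive T s); exact DT.
  - eexists; exact DX.
  - eexists; exact DZ.
  - exact (sqr_GT_pos s Hs).
  - exact helix_sin_neq0.
Qed.

Lemma helix_cot (s : R) : in_I a b s -> cos eta / sin eta = u s * sigma_mu G K T s.
Proof.
  intros Hs. assert (HN := sqr_GT_pos s Hs). assert (Hsin := helix_sin_neq0).
  assert (Hq := sqrt_sqrt _ (Rlt_le _ _ HN)). assert (Hq0 := sqrt_lt_R0 _ HN).
  assert (Hn := helix_w_numerator s Hs).
  rewrite sigma_mu_eq by exact Hs. unfold u.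
  set (P := Derive T s * G s - T s * Derive G s - N s * K s) in *.
  set (q := sqrt (N s)) in *.
  replace (w s / (q * sin eta) * (P / (N s * q))) with (w s * P / ((q * q) * N s * sin eta))
    by (field; repeat split; assumption || lra).
  rewrite Hn, Hq. field. split; [exact Hsin | lra].
Qed.

Lemma helix_cot_sigma :
  sin eta <> 0 /\
  ((forall s, in_I a b s -> cos eta / sin eta = - sigma_mu G K T s) \/
   (forall s, in_I a b s -> cos eta / sin eta = sigma_mu G K T s)).
Proof.
  split; [exact helix_sin_neq0|].
  destruct (in_I_nonempty a b Hab) as [s0 Hs0].
  assert (Hu : forall s, in_I a b s -> u s = u s0).
  { intros s Hs. exact (continuous_sign_const_on a b u helix_sign_continuous helix_sign_sqr s s0 Hs Hs0). }
  assert (Hu0 := helix_sign_sqr s0 Hs0).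
  destruct (Rsqr_eq (u s0) 1) as [H1|H1]; [unfold Rsqr; rewrite Hu0; ring | right | left];
    intros s Hs; rewrite (helix_cot s Hs), (Hu s Hs), H1; ring.
Qed.

End Helix.

Section Axis.

Variable c0 : R.
Hypothesis Hsigma : forall s, in_I a b s -> sigma_mu G K T s = c0.

(* By [helix_parallel], the part of an axis normal to [mu] is along [T xi + G v]. *)
Definition helix_axis (s : R) : vec3 :=
  vadd (vscal c0 (mu s)) (vscal (/ sqrt (N s)) (vadd (vscal (T s) (xi s)) (vscal (G s) (v s)))).

Lemma helix_axis_dot_derive (s : R) (d : vec3) : in_I a b s ->
  is_derive (fun t => dot (helix_axis t) d) s 0.
Proof.
  intros Hs.
  assert (Hext : forall t, c0 * dot (mu t) d + (T t * dot (xi t) d + G t * dot (v t) d) / sqrt (N t)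
                           = dot (helix_axis t) d).
  { intros t. unfold helix_axis. rewrite !dot_addl, !dot_scall, dot_addl, !dot_scall.
    unfold Rdiv. ring. }
  apply (is_derive_ext _ _ _ _ Hext).
  destruct (myller_darboux s d Hs) as (DX & DM & DV).
  destruct (myller_is_derive_GT s Hs) as [DG DT].
  apply (is_derive_axis_component _ _ _ G K T s c0 _ _ DX DM DV DG DT (sqr_GT_pos s Hs)).
  rewrite <- sigma_mu_eq by exact Hs. exact (Hsigma s Hs).
Qed.

Lemma helix_axis_const (s t : R) : in_I a b s -> in_I a b t -> helix_axis s = helix_axis t.
Proof.
  intros Hs Ht. apply vec3_eq_dot. intros d.
  apply (is_derive_0_const_on a b (fun t => dot (helix_axis t) d)); auto.
  intros x Hx. exact (helix_axis_dot_derive x d Hx).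
Qed.

Lemma helix_axis_norm (s : R) : in_I a b s -> dot (helix_axis s) (helix_axis s) = 1 + c0 ^ 2.
Proof.
  intros Hs. destruct (myller_orthonormal s Hs) as (Hxx & Hmm & Hvv & Hmx & Hmv & Hxv).
  assert (HN := sqr_GT_pos s Hs).
  assert (Hq := sqrt_sqrt _ (Rlt_le _ _ HN)). assert (Hq0 := sqrt_lt_R0 _ HN).
  unfold helix_axis.
  repeat rewrite ?dot_addl, ?dot_addr, ?dot_scall, ?dot_scalr.
  rewrite (dotC (xi s) (mu s)), (dotC (v s) (mu s)), (dotC (v s) (xi s)), Hxx, Hmm, Hvv, Hmx, Hmv, Hxv.
  set (q := sqrt (N s)) in *.
  transitivity (c0 ^ 2 + N s / (q * q)); [unfold N; field; lra|].
  rewrite Hq. field. lra.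
Qed.

Lemma helix_axis_mu (s : R) : in_I a b s -> dot (mu s) (helix_axis s) = c0.
Proof.
  intros Hs. destruct (myller_orthonormal s Hs) as (_ & Hmm & _ & Hmx & Hmv & _).
  unfold helix_axis. repeat rewrite ?dot_addr, ?dot_scalr.
  rewrite Hmm, Hmx, Hmv. ring.
Qed.

Lemma sigma_const_mu_helix : mu_helix a b mu.
Proof.
  destruct (in_I_nonempty a b Hab) as [s0 Hs0].
  assert (H1c : 0 < 1 + c0 ^ 2) by nra.
  assert (Hp := sqrt_sqrt _ (Rlt_le _ _ H1c)). assert (Hp0 := sqrt_lt_R0 _ H1c).
  exists (vscal (/ sqrt (1 + c0 ^ 2)) (helix_axis s0)), (PI / 2 - atan c0). split.
  - rewrite dot_scall, dot_scalr, helix_axis_norm by exact Hs0.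
    rewrite <- Hp at 3. field. lra.
  - intros s Hs.
    rewrite dot_scalr, (helix_axis_const s0 s Hs0 Hs), helix_axis_mu by exact Hs.
    rewrite cos_shift, sin_atan. unfold Rsqr. replace (c0 * c0) with (c0 ^ 2) by ring.
    field. lra.
Qed.

End Axis.
End Myller.

Theorem theorem17 (a b : Rbar) (r xi mu v : R -> vec3) (G K T : R -> R) :
  Rbar_lt a b ->
  myller_config a b r xi mu v G K T ->
  (forall s, in_I a b s -> (G s, T s) <> (0, 0)) ->
  (mu_helix a b mu <->
     exists c : R, forall s, in_I a b s -> sigma_mu G K T s = c) /\
  (forall (d : vec3) (eta : R), dot d d = 1 ->
     (forall s, in_I a b s -> dot (mu s) d = cos eta) ->
     sin eta <> 0 /\
     ((forall s, in_I a b s -> cos eta / sin eta = - sigma_mu G K T s) \/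
      (forall s, in_I a b s -> cos eta / sin eta = sigma_mu G K T s))).
Proof.
  intros Hab Hmyller HGT.
  assert (Hcot := helix_cot_sigma a b r xi mu v G K T Hmyller Hab HGT).
  split; [split|exact Hcot].
  - intros (d & eta & Hd & Haxis).
    destruct (Hcot d eta Hd Haxis) as [_ [Hneg | Hpos]].
    + exists (- (cos eta / sin eta)). intros s Hs. rewrite (Hneg s Hs). ring.
    + exists (cos eta / sin eta). intros s Hs. symmetry. exact (Hpos s Hs).
  - intros [c0 Hsigma]. exact (sigma_const_mu_helix a b r xi mu v G K T Hmyller Hab HGT c0 Hsigma).
Qed.
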